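(* Let $p\in(0,1)$ and let $Y=[\xi_{ij}]$ be a $p$-robust random 0–1 matrix of size $n\times n$ (with otherwise arbitrary distribution). Then $$\Pr(Y\text{ has a perfect matching})\ge 1-(n+1)^3(1-p)^{\lfloor n/2\rfloor}.$$
   Context: A perfect matching of a 0–1 $n\times n$ matrix $Y$ is a choice of indices $((i_1,1),\dots,(i_n,n))$ with $\{i_1,\dots,i_n\}=\{1,\dots,n\}$ and $\xi_{i_j,j}=1$ for all $j$ (equivalently, a perfect matching of the bipartite graph with bi-adjacency matrix $Y$). In an $n\times n$ matrix, $(i,j)\prec(k,\ell)$ if $i<k$, or $i=k$ and $j<\ell$. $Y$ is $p$-robust if for every $(i,j)$, every set of positions $(i_1,j_1),\dots,(i_r,j_r)\prec(i,j)$ and every $a_1,\dots,a_r\in\{0,1\}$ with the conditioning event of positive probability, $\Pr(\xi_{ij}=1\mid\xi_{i_1j_1}=a_1,\dots,\xi_{i_rj_r}=a_r)\ge p$ (and $\Pr(\xi_{ij}=1)\ge p$). *)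

From HB Require Import structures.
From mathcomp Require Import all_boot all_order all_algebra all_fingroup.
Set Implicit Arguments. Unset Strict Implicit. Unset Printing Implicit Defensive.
Import Order.TTheory GRing.Theory Num.Theory.
Local Open Scope ring_scope.

(* A random 0-1 n x n matrix is modelled by its distribution: a probability
   mass function on the finite type 'M[bool]_n (entry true = 1, false = 0). *)
Definition is_distribution (R : numDomainType) (n : nat)
  (mu : {ffun 'M[bool]_n -> R}) : Prop :=
  (forall Y, 0 <= mu Y) /\ \sum_Y mu Y = 1.

Definition prob (R : numDomainType) (n : nat) (mu : {ffun 'M[bool]_n -> R})
  (E : pred 'M[bool]_n) : R := \sum_(Y | E Y) mu Y.

Definition prec (n : nat) (u v : 'I_n * 'I_n) : bool :=
  (u.1 < v.1)%N || ((u.1 == v.1) && (u.2 < v.2)%N).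

Definition cond_event (n : nat) (S : {set 'I_n * 'I_n})
  (a : 'I_n * 'I_n -> bool) : pred 'M[bool]_n :=
  fun Y => [forall q in S, Y q.1 q.2 == a q].

Definition p_robust (R : numFieldType) (n : nat) (p : R)
  (mu : {ffun 'M[bool]_n -> R}) : Prop :=
  forall (i j : 'I_n) (S : {set 'I_n * 'I_n}) (a : 'I_n * 'I_n -> bool),
    (forall q, q \in S -> prec q (i, j)) ->
    0 < prob mu (cond_event S a) ->
    p <= prob mu (fun Y => cond_event S a Y && Y i j) / prob mu (cond_event S a).

Definition has_perfect_matching (n : nat) (Y : 'M[bool]_n) : bool :=
  [exists s : 'S_n, [forall j : 'I_n, Y (s j) j]].

From HB Require Import structures.
From mathcomp Require Import all_boot all_order all_algebra all_fingroup.
From mathcomp Require Import zify lra.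
Set Implicit Arguments. Unset Strict Implicit. Unset Printing Implicit Defensive.
Import Order.TTheory GRing.Theory Num.Theory.

(* If Y has no perfect matching, Hall's theorem yields a set J of columns with
   fewer than #|J| neighbouring rows, hence a set I of n + 1 - #|J| rows such
   that Y vanishes on I x J.  Revealing the entries of such a block in
   lexicographic order, p-robustness bounds the probability that it vanishes by
   (1 - p)^(#|I| #|J|).  A union bound over the 'C(n, k) 'C(n, n + 1 - k) blocks
   with #|J| = k concludes: writing j = min(k, n + 1 - k), the binomial factor
   is at most (n^2)^j and k (n + 1 - k) >= j * n./2, so each of the n + 1 terms
   is at most x^j <= x for x = (n + 1)^2 (1 - p)^(n./2), which may be assumed
   to be at most 1. *)

Section HallMarriage.
Variables (A B : finType) (a0 : A).
Implicit Types (r : B -> A -> bool) (C J K : {set B}) (X : {set A}).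

Definition neighbours r J : {set A} := [set a | [exists j in J, r j a]].

Definition hall_condition r C :=
  forall J, J \subset C -> #|J| <= #|neighbours r J|.

Definition matchable r C :=
  exists f : B -> A, {in C &, injective f} /\ {in C, forall j, r j (f j)}.

Definition within r X j a := r j a && (a \in X).

Lemma neighbours_within r X J :
  neighbours r J \subset neighbours (within r X) J :|: ~: X.
Proof.
apply/subsetP=> a; rewrite !inE => /existsP[j /andP[jJ rja]].
case: (boolP (a \in X)) => aX; last by rewrite orbT.
by apply/orP; left; apply/existsP; exists j; rewrite jJ /within rja.
Qed.

Lemma matchable_within_neighbours r J :
  matchable r J -> matchable (within r (neighbours r J)) J.
Proof.
case=> f [f_inj f_r]; exists f; split=> // j jJ.
by rewrite /within f_r // inE; apply/existsP; exists j; rewrite jJ f_r.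
Qed.

Lemma matchable_glue r C J X :
  matchable (within r X) J -> matchable (within r (~: X)) (C :\: J) ->
  matchable r C.
Proof.
case=> [f [f_inj f_r]] [g [g_inj g_r]].
have inX j : j \in J -> f j \in X by move=> /f_r /andP[].
have notinX j : j \notin J -> j \in C -> g j \notin X.
  move=> jJ jC; have /g_r/andP[_] : j \in C :\: J by rewrite inE jJ jC.
  by rewrite inE.
exists (fun j => if j \in J then f j else g j); split=> [j k jC kC|j jC] /=.
  case: ifPn => jJ; case: ifPn => kJ.
  - exact: f_inj.
  - by move=> fg; have := notinX k kJ kC; rewrite -fg inX.
  - by move=> gf; have := notinX j jJ jC; rewrite gf inX.
  - by apply: g_inj; rewrite inE ?jJ ?kJ.
case: ifPn => jJ; first by case/andP: (f_r j jJ).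
by have /andP[] : within r (~: X) j (g j) by apply: g_r; rewrite inE jJ.
Qed.

Lemma hall_condition_tight r C J0 :
  hall_condition r C -> J0 \subset C -> #|neighbours r J0| <= #|J0| ->
  hall_condition (within r (~: neighbours r J0)) (C :\: J0).
Proof.
move=> hallC J0C tightJ0 K KCJ0; set r' := within r (~: neighbours r J0).
have KJ0_disj : [disjoint K & J0].
  by rewrite disjoints_subset (subset_trans KCJ0) // setDE subsetIr.
have hallKJ0 : #|K :|: J0| <= #|neighbours r (K :|: J0)|.
  by apply: hallC; rewrite subUset J0C (subset_trans KCJ0) ?subsetDl.
have splitN : neighbours r (K :|: J0) \subset neighbours r' K :|: neighbours r J0.
  apply/subsetP=> a; rewrite !inE => /existsP[j]; rewrite inE.
  case/andP=> [/orP[jK|jJ0] rja]; last first.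
    by apply/orP; right; apply/existsP; exists j; rewrite jJ0.
  case: (boolP [exists j in J0, r j a]) => aN; rewrite ?orbT // orbF.
  by apply/existsP; exists j; rewrite jK /r' /within rja !inE aN.
have cardKJ0 : #|K :|: J0| = #|K| + #|J0|.
  by apply/eqP; rewrite (leq_card_setU K J0).2.
move: hallKJ0 (subset_leq_card splitN).
by have := (leq_card_setU (neighbours r' K) (neighbours r J0)).1; lia.
Qed.

Lemma hall_condition_loose r C c a :
  hall_condition r C -> c \in C ->
  (forall K, K \proper C -> K != set0 -> #|K| < #|neighbours r K|) ->
  hall_condition (within r (~: [set a])) (C :\ c).
Proof.
move=> hallC cC loose K KCc.
have [-> | Kn0] := eqVneq K set0; first by rewrite cards0.
have KC : K \proper C by apply: sub_proper_trans KCc (properD1 cC).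
have := subset_leq_card (neighbours_within r (~: [set a]) K); rewrite setCK.
have := (leq_card_setU (neighbours (within r (~: [set a])) K) [set a]).1.
by move: (loose K KC Kn0); rewrite cards1; lia.
Qed.

Lemma hall_condition_neighbour r C c :
  hall_condition r C -> c \in C -> exists a, r c a.
Proof.
move=> /(_ [set c]); rewrite sub1set cards1 => /[apply].
rewrite card_gt0 => /set0Pn[a]; rewrite inE => /existsP[j /andP[]].
by rewrite inE => /eqP-> rca; exists a.
Qed.

Theorem hall_marriage r C : hall_condition r C -> matchable r C.
Proof.
elim: {C}_.+1 {-2}C (ltnSn #|C|) r => // N IH C ltCN r hallC.
have [-> | [c cC]] := set_0Vmem C.
  by exists (fun=> a0); split=> j; rewrite inE.
have hall_sub J : J \subset C -> hall_condition r J.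
  by move=> JC K KJ; apply: hallC (subset_trans KJ JC).
have ltDC J : J \subset C -> J != set0 -> #|C :\: J| < N.
  move=> JC Jn0; rewrite cardsD (setIidPr JC); move: ltCN (subset_leq_card JC).
  by rewrite -card_gt0 in Jn0; lia.
(* Either a nonempty proper J0 is tight, so J0 and C :\: J0 can be matched
   independently, or Hall's condition holds with slack and any edge (c, a)
   can be used. *)
case: (boolP [exists J0 : {set B},
                [&& J0 \proper C, J0 != set0 & #|neighbours r J0| <= #|J0|]]).
  case/existsP=> J0 /and3P[J0C J0n0 tightJ0]; have J0subC := proper_sub J0C.
  apply: (matchable_glue (J := J0) (X := neighbours r J0)).
    apply/matchable_within_neighbours/IH; last exact: hall_sub J0subC.
    by move: ltCN (proper_card J0C); lia.
  by apply: IH; [exact: ltDC | exact: hall_condition_tight J0subC tightJ0].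
rewrite negb_exists => /forallP loose.
have [a rca] := hall_condition_neighbour hallC cC.
apply: (matchable_glue (J := [set c]) (X := [set a])).
  exists (fun=> a); split=> [j k|j]; rewrite inE => /eqP->.
    by rewrite inE => /eqP.
  by rewrite /within rca set11.
apply: IH.
  by apply: ltDC; rewrite ?sub1set //; apply/set0Pn; exists c; rewrite set11.
apply: hall_condition_loose => // K KC Kn0.
by move: (loose K); rewrite KC Kn0 /= -ltnNge.
Qed.

End HallMarriage.

Lemma exists_subset_card (T : finType) (A : {set T}) k :
  k <= #|A| -> exists2 B : {set T}, B \subset A & #|B| = k.
Proof.
move=> kA; exists [set x in take k (enum A)].
  by apply/subsetP=> x; rewrite inE => /mem_take; rewrite mem_enum.
rewrite cardsE (card_uniqP _) ?take_uniq ?enum_uniq // size_take.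
by rewrite -cardE; move: kA; case: ltnP => //; lia.
Qed.

Lemma zero_block_of_no_perfect_matching n (Y : 'M[bool]_n) :
  ~~ has_perfect_matching Y ->
  exists J I : {set 'I_n},
    #|I| = n.+1 - #|J| /\ cond_event (setX I J) (fun=> false) Y.
Proof.
case: n Y => [|n] Y noPM.
  by case/negP: noPM; apply/existsP; exists 1%g; apply/forallP=> -[].
pose r (j i : 'I_n.+1) : bool := Y i j.
have [hallY | /forallPn[J]] :=
  boolP [forall J : {set 'I_n.+1}, #|J| <= #|neighbours r J|].
  have [f [f_inj f_r]] := hall_marriage ord0 (C := setT) (r := r)
    (fun J _ => forallP hallY J).
  have f_injT : injective f by move=> j k; apply: f_inj; rewrite inE.
  case/negP: noPM; apply/existsP; exists (perm f_injT).
  by apply/forallP=> j; rewrite permE; apply: f_r; rewrite inE.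
rewrite -ltnNge => deficient.
have [I INc cardI] :
    exists2 I : {set 'I_n.+1}, I \subset ~: neighbours r J & #|I| = n.+2 - #|J|.
  apply: exists_subset_card; rewrite [#|~: _|]cardsCs setCK card_ord.
  move: deficient (subset_leq_card (subsetT J)); rewrite cardsT card_ord.
  by move: #|J| #|neighbours r J| => j m; lia.
exists J, I; split=> //; apply/forallP=> -[i j]; apply/implyP; rewrite inE /=.
case/andP=> iI jJ; have := subsetP INc i iI; rewrite !inE; apply: contraNT => Yij.
by apply/existsP; exists j; rewrite jJ /r; case: (Y i j) Yij.
Qed.

Local Open Scope ring_scope.

Section Probability.
Variables (R : realFieldType) (n : nat) (mu : {ffun 'M[bool]_n -> R}).
Hypothesis mu_ge0 : forall Y, 0 <= mu Y.
Implicit Types (E F : pred 'M[bool]_n) (S T : {set 'I_n * 'I_n}).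

Lemma prob_ge0 E : 0 <= prob mu E.
Proof. exact: sumr_ge0. Qed.

Lemma le_prob E F : (forall Y, E Y -> F Y) -> prob mu E <= prob mu F.
Proof.
move=> EF; rewrite [leRHS](bigID E) /= (eq_bigl E) ?lerDl ?prob_ge0 //.
by move=> Y; case: (boolP (E Y)) => [/EF->|]; rewrite ?andbF.
Qed.

Lemma probID E F :
  prob mu E = prob mu (fun Y => E Y && F Y) + prob mu (fun Y => E Y && ~~ F Y).
Proof. exact: bigID. Qed.

Hypothesis mu_sum1 : \sum_Y mu Y = 1.

Lemma prob_compl E : prob mu E = 1 - prob mu (predC E).
Proof. by rewrite /prob -mu_sum1 [X in _ = X - _](bigID E) addrK. Qed.

Lemma prob_le_sum_cover (I : finType) (P : pred I) (F : I -> pred 'M[bool]_n) E :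
  (forall Y, E Y -> exists2 i, P i & F i Y) ->
  prob mu E <= \sum_(i | P i) prob mu (F i).
Proof.
move=> cover; rewrite /prob (exchange_big_dep xpredT) //= [leRHS](bigID E) /=.
rewrite -[leLHS]addr0 lerD ?sumr_ge0 // => [|Y _]; last exact: sumr_ge0.
apply: ler_sum => Y EY; have [i Pi FiY] := cover Y EY.
by rewrite (bigD1 i) ?Pi ?FiY //= lerDl sumr_ge0.
Qed.

Lemma cond_eventD1 S a t Y : t \in S ->
  cond_event S a Y = cond_event (S :\ t) a Y && (Y t.1 t.2 == a t).
Proof.
move=> tS; apply/forallP/andP => [SY | [/forallP StY Yt] q].
  split; last by have := SY t; rewrite tS.
  apply/forallP=> q; apply/implyP; rewrite inE => /andP[_ qS].
  by have := SY q; rewrite qS.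
apply/implyP=> qS; have [-> // | qt] := eqVneq q t.
by have := StY q; rewrite !inE qt qS.
Qed.

Definition pos_rank (q : 'I_n * 'I_n) : nat := q.1 * n + q.2.

Lemma prec_pos_rank u v : (pos_rank u < pos_rank v)%N -> prec u v.
Proof.
rewrite /pos_rank /prec => lt_uv.
have := ltn_ord u.2; have := ltn_ord v.2.
case: (ltngtP u.1 v.1) => // [gt_uv | eq_uv].
  have : (v.1 * n + n <= u.1 * n)%N by rewrite -mulSnr leq_mul2r gt_uv orbT.
  lia.
have -> : u.1 == v.1 by apply/eqP/val_inj.
by move: lt_uv; rewrite eq_uv; lia.
Qed.

Lemma pos_rank_inj : injective pos_rank.
Proof.
move=> u v eq_uv; have n_gt0 : (0 < n)%N := leq_ltn_trans (leq0n _) (ltn_ord u.1).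
have [eq1 eq2] : u.1 = v.1 /\ u.2 = v.2.
  split; apply: val_inj.
    have := congr1 (divn^~ n) eq_uv.
    by rewrite /pos_rank !divnMDl // !divn_small ?addn0.
  have := congr1 (modn^~ n) eq_uv.
  by rewrite /pos_rank !modnMDl !modn_small.
by rewrite [u]surjective_pairing [v]surjective_pairing eq1 eq2.
Qed.

Variable p : R.
Hypothesis robust : p_robust p mu.

Lemma p_robust_prob_zero S a i j : (forall q, q \in S -> prec q (i, j)) ->
  prob mu (fun Y => cond_event S a Y && ~~ Y i j)
    <= (1 - p) * prob mu (cond_event S a).
Proof.
move=> S_prec; have := prob_ge0 (cond_event S a); rewrite le_eqVlt.
case/orP=> [/eqP P0 | P_gt0].
  by rewrite -P0 mulr0 [leRHS]P0; apply: le_prob => Y /andP[].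
have := probID (cond_event S a) (fun Y => Y i j).
have := robust S_prec P_gt0; rewrite ler_pdivlMr //.
nra.
Qed.

Lemma prob_zero_block T : p <= 1 ->
  prob mu (cond_event T (fun=> false)) <= (1 - p) ^+ #|T|.
Proof.
move=> p_le1; move cardT: #|T| => k.
elim: k T cardT => [|k IH] T cardT.
  rewrite expr0 -mu_sum1; apply: le_prob => Y _ //.
have [t0 t0T] : {t0 | t0 \in T} by apply/sigW/set0Pn; rewrite -card_gt0 cardT.
have [t tT t_max] := arg_maxnP pos_rank t0T; have {}tT : t \in T := tT.
have T'_prec q : q \in T :\ t -> prec q (t.1, t.2).
  rewrite !inE => /andP[qt qT]; apply: prec_pos_rank; rewrite -surjective_pairing.
  by rewrite ltn_neqAle (inj_eq pos_rank_inj) qt; apply: t_max.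
pose F Y := cond_event (T :\ t) (fun=> false) Y && ~~ Y t.1 t.2.
apply: le_trans (le_prob (F := F) _) _.
  by move=> Y; rewrite (cond_eventD1 _ _ tT) eqbF_neg.
apply: (le_trans (p_robust_prob_zero (fun=> false) T'_prec)).
rewrite exprS ler_wpM2l ?subr_ge0 //.
by apply: IH; move: cardT; rewrite (cardsD1 t T) tT add1n => -[].
Qed.

Lemma prob_no_perfect_matching_le :
  prob mu (predC (@has_perfect_matching n)) <=
  \sum_(J : {set 'I_n}) \sum_(I : {set 'I_n} | #|I| == (n.+1 - #|J|)%N)
    prob mu (cond_event (setX I J) (fun=> false)).
Proof.
rewrite pair_big_dep; apply: prob_le_sum_cover => Y.
case/zero_block_of_no_perfect_matching=> J [I [cardI zeroY]].
by exists (J, I); rewrite /= ?cardI.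
Qed.

End Probability.

Lemma bin_leq_exp n k : ('C(n, k) <= n ^ k)%N.
Proof.
rewrite (leq_trans (leq_pmulr _ (fact_gt0 k))) // bin_ffact ffact_prod.
rewrite -[k in (_ <= n ^ k)%N]card_ord -prod_nat_const.
by apply: leq_prod => i _; rewrite leq_subr.
Qed.

Lemma bin_mul_bin_leq n k l : (k + l = n.+1)%N -> (k <= l)%N ->
  ('C(n, k) * 'C(n, l) <= (n ^ 2) ^ k)%N.
Proof.
case: k => [|k] kl_n kl.
  by rewrite add0n in kl_n; rewrite kl_n (bin_small (ltnSn n)) muln0.
have n_gt0 : (0 < n)%N by lia.
have -> : l = (n - k)%N by lia.
rewrite bin_sub; last by lia.
rewrite expnAC -mulnn leq_mul ?bin_leq_exp //.
exact: leq_trans (bin_leq_exp n k) (leq_pexp2l n_gt0 (leqnSn k)).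
Qed.

Lemma block_term_le (R : realFieldType) (q : R) n k l :
  0 <= q <= 1 -> (n.+1 ^ 2)%:R * q ^+ n./2 <= 1 -> (k + l = n.+1)%N ->
  q ^+ (k * l) *+ ('C(n, k) * 'C(n, l)) <= (n.+1 ^ 2)%:R * q ^+ n./2.
Proof.
move=> /andP[q_ge0 q_le1] x_le1.
wlog kl : k l / (k <= l)%N.
  move=> IH; case: (leqP k l) => [|/ltnW] kl kl_n; first exact: IH.
  by rewrite mulnC [('C(n, k) * _)%N]mulnC; apply: IH; rewrite // addnC.
case: k => [|k] in kl * => kl_n.
  rewrite add0n in kl_n; rewrite kl_n (bin_small (ltnSn n)) muln0 mulr0n.
  by rewrite mulr_ge0 ?exprn_ge0.
have bin_le : ('C(n, k.+1) * 'C(n, l) <= (n.+1 ^ 2) ^ k.+1)%N.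
  by rewrite (leq_trans (bin_mul_bin_leq kl_n kl)) // leq_exp2r // leq_exp2r.
have exp_le : (n./2 * k.+1 <= l * k.+1)%N.
  by rewrite leq_mul2r leq_half_double -addnn; lia.
rewrite -mulr_natr.
apply: le_trans (_ : q ^+ (n./2 * k.+1) * ((n.+1 ^ 2) ^ k.+1)%:R <= _).
  apply: ler_pM; rewrite ?exprn_ge0 ?ler0n ?ler_nat //.
  by apply: ler_wiXn2l => //; rewrite [(k.+1 * l)%N]mulnC.
by rewrite natrX mulrC exprM -exprMn ler_iXnr // mulr_ge0 ?exprn_ge0.
Qed.

Lemma sum_set_by_card (V : nmodType) n (G : nat -> V) :
  \sum_(J : {set 'I_n}) G #|J| = \sum_(k < n.+1) G k *+ 'C(n, k).
Proof.
rewrite (partition_big (fun J : {set 'I_n} => (inord #|J| : 'I_n.+1)) xpredT) //=.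
apply: eq_bigr => k _.
have card_leq (J : {set 'I_n}) : (#|J| <= n)%N.
  by rewrite -[leqRHS](card_ord n) max_card.
rewrite (eq_bigl (mem [set J : {set 'I_n} | #|J| == k])); last first.
  by move=> J; rewrite !inE /= -val_eqE /= inordK ?ltnS.
rewrite (eq_bigr (fun=> G k)); last by move=> J; rewrite !inE => /eqP->.
by rewrite sumr_const card_draws card_ord.
Qed.

Lemma sum_blocks_by_card (R : pzSemiRingType) n (x : R) :
  \sum_(J : {set 'I_n}) \sum_(I : {set 'I_n} | #|I| == (n.+1 - #|J|)%N)
    x ^+ (#|I| * #|J|) =
  \sum_(k < n.+1) x ^+ ((n.+1 - k) * k) *+ ('C(n, n.+1 - k) * 'C(n, k)).
Proof.
under [RHS]eq_bigr do rewrite mulrnA.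
rewrite -(sum_set_by_card n (fun k => x ^+ ((n.+1 - k) * k) *+ 'C(n, n.+1 - k))).
apply: eq_bigr => J _.
rewrite (eq_bigr (fun=> x ^+ ((n.+1 - #|J|) * #|J|))) => [|I /eqP-> //].
rewrite (eq_bigl (mem [set I : {set 'I_n} | #|I| == (n.+1 - #|J|)%N])) => [|I].
  by rewrite sumr_const card_draws card_ord.
by rewrite !inE.
Qed.

Lemma sum_block_terms_le (R : realFieldType) (q : R) n :
  0 <= q <= 1 -> (n.+1)%:R ^+ 3 * q ^+ n./2 <= 1 ->
  \sum_(k < n.+1) q ^+ ((n.+1 - k) * k) *+ ('C(n, n.+1 - k) * 'C(n, k))
    <= (n.+1)%:R ^+ 3 * q ^+ n./2.
Proof.
move=> q01 bound_le1.
have x_le1 : (n.+1 ^ 2)%:R * q ^+ n./2 <= 1.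
  apply: le_trans bound_le1; rewrite -natrX ler_wpM2r ?exprn_ge0 ?ler_nat //.
    by case/andP: q01.
  exact: leq_pexp2l.
apply: le_trans (_ : _ <= \sum_(k < n.+1) (n.+1 ^ 2)%:R * q ^+ n./2) _.
  by apply: ler_sum => k _; apply: block_term_le; rewrite // subnK // ltnW.
by rewrite sumr_const card_ord -mulrnAl -mulrnA -expnSr natrX.
Qed.

Theorem theorem5 (R : realFieldType) (n : nat) (p : R)
  (mu : {ffun 'M[bool]_n -> R}) :
  0 < p < 1 ->
  is_distribution mu ->
  p_robust p mu ->
  1 - (n.+1)%:R ^+ 3 * (1 - p) ^+ (n./2) <= prob mu (@has_perfect_matching n).
Proof.
move=> /andP[p_gt0 p_lt1] [mu_ge0 mu_sum1] robust.
have q01 : 0 <= 1 - p <= 1 by rewrite subr_ge0 ltW //= lerBlDr lerDl ltW.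
have [bound_gt1 | bound_le1] := ltP 1 ((n.+1)%:R ^+ 3 * (1 - p) ^+ n./2).
  by rewrite (le_trans _ (prob_ge0 mu_ge0 _)) // subr_le0 ltW.
rewrite (prob_compl mu_sum1) lerD2l lerN2.
apply: le_trans (prob_no_perfect_matching_le mu_ge0) _.
apply: le_trans (_ : _ <= \sum_(J : {set 'I_n})
    \sum_(I : {set 'I_n} | #|I| == (n.+1 - #|J|)%N) (1 - p) ^+ (#|I| * #|J|)) _.
  apply: ler_sum => J _; apply: ler_sum => I _; rewrite -cardsX.
  exact: (prob_zero_block mu_ge0 mu_sum1 robust _ (ltW p_lt1)).
by rewrite sum_blocks_by_card sum_block_terms_le.
Qed.
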